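(* Let $L,T$ be finite distributive lattices and $p:L\to T$ a map such that (i) $p|_{\mathcal{J}(L)}$ is a quotient map, (ii) $p(\mathcal{J}(L))=\mathcal{J}(T)$, and (iii) $p$ is a join-preserving quotient map of posets. Let $p_0=p|_{\mathcal{J}(L)}:\mathcal{J}(L)\to\mathcal{J}(T)$. Then $\mathbf{B}_T\circ p=\hat{p_0}\circ\mathbf{B}_L$, where $\mathbf{B}_L:L\to\mathcal{O}(\mathcal{J}(L))$, $\mathbf{B}_L(a)=\{x\in\mathcal{J}(L):x\le a\}$ and $\mathbf{B}_T$ analogously are the Birkhoff isomorphisms; in particular $p$ is isomorphic to the induced map $\hat{p_0}$.
   Context: $\mathcal{J}(L)$ is the set of join-irreducible elements of $L$ (elements $x\ne0$ such that $x=a\vee b$ implies $x=a$ or $x=b$), with the order inherited from $L$. A quotient map between posets is a surjective order-preserving map $\phi:A\to B$ such that for all $a\le b$ in $B$ there are $x\le y$ in $A$ with $\phi(x)=a,\phi(y)=b$. $\mathcal{O}(Q)$ denotes the down-sets of a poset $Q$ under inclusion, $\downarrow x=\{m:m\le x\}$; for a quotient map $p_0:Q\to R$ of finite posets, $\hat{p_0}(\emptyset)=\emptyset$ and $\hat{p_0}(A)=\bigcup_i\downarrow p_0(a_i)$ over the maximal elements $a_i$ of $A$. Two maps $f:A\to B$, $f':A'\to B'$ are isomorphic if there are isomorphisms $g_1:A\to A'$, $g_2:B\to B'$ with $g_2\circ f=f'\circ g_1$. *)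

From HB Require Import structures.
From mathcomp Require Import all_boot all_order.
Set Implicit Arguments. Unset Strict Implicit. Unset Printing Implicit Defensive.
Import Order.Theory.
Local Open Scope order_scope.

Section Defs.
Context {d : Order.disp_t} {L : finTBDistrLatticeType d}.

Definition join_irr (x : L) : bool :=
  (x != \bot) && [forall a : L, forall b : L, (x == a `|` b) ==> ((x == a) || (x == b))].

Definition JI : {set L} := [set x | join_irr x].

Definition birkhoff (a : L) : {set L} := [set x in JI | x <= a].

Definition maximal_in (A : {set L}) (a : L) : bool :=
  (a \in A) && [forall b in A, ~~ (a < b)].
End Defs.

Arguments JI {d} L.

Section Maps.
Context {dA dB : Order.disp_t} {A : finTBDistrLatticeType dA} {B : finTBDistrLatticeType dB}.

Definition quotient_map_on (X : {set A}) (Y : {set B}) (f : A -> B) : Prop :=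
  [/\ (forall x, x \in X -> f x \in Y),
      (forall y, y \in Y -> exists2 x, x \in X & f x = y),
      (forall x y, x \in X -> y \in X -> x <= y -> f x <= f y) &
      (forall a b, a \in Y -> b \in Y -> a <= b ->
         exists x y, [/\ x \in X, y \in X, x <= y, f x = a & f y = b])].

Definition join_preserving (f : A -> B) : Prop :=
  forall a b, f (a `|` b) = f a `|` f b.

(* hat p0 (S) = union of the down-sets (in J(B)) of p0(s) over maximal s in S;
   hat p0 (emptyset) = emptyset automatically *)
Definition hat_map (p0 : A -> B) (S : {set A}) : {set B} :=
  [set y in JI B | [exists s, maximal_in S s && (y <= p0 s)]].
End Maps.

(* Every element of a finite distributive lattice is the join of the
   join-irreducibles below it, and join-irreducibles are join-prime.  Hence for
   y join-irreducible, y <= p a = \join_(x in B_L(a)) p x forces y <= p x for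
   some x in B_L(a), and then y <= p m for any maximal m of B_L(a) above x.
   Only join-preservation and surjectivity of p (to get p \bot = \bot) are
   needed. *)
From HB Require Import structures.
From mathcomp Require Import all_boot all_order.
Set Implicit Arguments. Unset Strict Implicit. Unset Printing Implicit Defensive.
Import Order.Theory.
Local Open Scope order_scope.

Lemma card_below_lt (d : Order.disp_t) (P : finPOrderType d) (b a : P) :
  b < a -> (#|[set z | (z < b)%O]| < #|[set z | (z < a)%O]|)%N.
Proof.
move=> ba; apply: proper_card; apply/properP; split.
  by apply/subsetP => z; rewrite !inE => /lt_trans; apply.
by exists b; rewrite !inE ?ba ?ltxx.
Qed.

Section JoinIrreducible.
Context {d : Order.disp_t} {L : finTBDistrLatticeType d}.
Implicit Types (a b u v y : L) (S : {set L}).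

Lemma join_irr_prime y u v :
  join_irr y -> (y <= u `|` v) = (y <= u) || (y <= v).
Proof.
move=> /andP[_ /forallP irr]; apply/idP/idP; last first.
  by case/orP=> [/le_trans|/le_trans]; apply; rewrite ?leUl ?leUr.
move=> yuv; have yE : y = y `&` u `|` y `&` v by rewrite -meetUr; exact/esym/meet_l.
have /forallP/(_ (y `&` v)) := irr (y `&` u).
by rewrite -yE eqxx => /orP[] /eqP->; rewrite leIr ?orbT.
Qed.

Lemma join_irr_le_joins (I : finType) (A : {set I}) (F : I -> L) y :
  join_irr y -> y <= \join_(i in A) F i -> exists2 i, i \in A & y <= F i.
Proof.
move=> yJ; elim/big_rec: _ => [|i z iA IH].
  by rewrite lex0 => /eqP yb; move: yJ; rewrite yb /join_irr eqxx.
by rewrite join_irr_prime // => /orP[yF|/IH//]; exists i.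
Qed.

Lemma join_reducible a :
  ~~ join_irr a -> a != \bot -> exists b c, [/\ a = b `|` c, b < a & c < a].
Proof.
rewrite /join_irr => /nandP[/negPn->//|/forallPn[b /forallPn[c]]].
rewrite negb_imply negb_or => /andP[/eqP aE /andP[ab ac]] _.
by exists b, c; rewrite !lt_neqAle eq_sym ab eq_sym ac aE leUl leUr.
Qed.

Lemma birkhoff_subset a b : a <= b -> birkhoff a \subset birkhoff b.
Proof.
by move=> ab; apply/subsetP => x; rewrite !inE => /andP[-> /le_trans->].
Qed.

Lemma joins_birkhoff a : \join_(x in birkhoff a) x = a.
Proof.
have [n] := ubnP #|[set z | z < a]|; elim: n a => // n IH a ltan.
apply/le_anti/andP; split; first by apply/joinsP => x; rewrite inE => /andP[].
have [aJ|aR] := boolP (join_irr a).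
  by apply: joins_sup; rewrite !inE aJ lexx.
have [->|a0] := eqVneq a \bot; first exact: le0x.
have [b [c [aE ba ca]]] := join_reducible aR a0.
have below x : x < a -> x <= \join_(z in birkhoff a) z.
  move=> xa; rewrite -{1}(IH x) ?le_joins ?birkhoff_subset ?ltW //.
  exact: leq_trans (card_below_lt xa) _.
by rewrite {1}aE leUx !below.
Qed.

Lemma exists_maximal_above S s :
  s \in S -> exists2 m, maximal_in S m & s <= m.
Proof.
move=> sS; case: (@arg_maxnP _ s [pred m | (m \in S) && (s <= m)]
                    (fun m => #|[set z | z < m]|)); first by rewrite /= sS lexx.
move=> m /andP[mS sm] mmax; exists m => //; rewrite /maximal_in mS.
apply/forall_inP => b bS; apply/negP => mb.
have := mmax b; rewrite /= bS (le_trans sm (ltW mb)) => /(_ isT).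
by rewrite leqNgt card_below_lt.
Qed.

End JoinIrreducible.

Section JoinPreserving.
Context {dA dB : Order.disp_t} {A : finTBDistrLatticeType dA}
  {B : finTBDistrLatticeType dB} (p : A -> B).
Hypothesis p_join : join_preserving p.

Lemma join_preserving_homo : {homo p : x y / x <= y}.
Proof. by move=> x y xy; rewrite -(join_r xy) p_join leUl. Qed.

Lemma join_preserving_bot : (exists x, p x = \bot) -> p \bot = \bot.
Proof.
by case=> x px; apply/eqP; rewrite -lex0 -px join_preserving_homo ?le0x.
Qed.

Lemma join_preserving_joins (I : finType) (S : {set I}) (F : I -> A) :
  p \bot = \bot -> p (\join_(i in S) F i) = \join_(i in S) p (F i).
Proof. by move=> p0; rewrite (big_morph p p_join p0). Qed.

End JoinPreserving.

Theorem mainTheorem18 (dL dT : Order.disp_t)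
  (L : finTBDistrLatticeType dL) (T : finTBDistrLatticeType dT) (p : L -> T) :
  quotient_map_on (JI L) (JI T) p ->
  [set p x | x in JI L] = JI T ->
  quotient_map_on [set: L] [set: T] p /\ join_preserving p ->
  forall a : L, birkhoff (p a) = hat_map p (birkhoff a).
Proof.
move=> _ _ [[_ p_onto _ _] p_join] a.
have p_homo := join_preserving_homo p_join.
have p0 : p \bot = \bot.
  apply: join_preserving_bot p_join _.
  by have [x _ px] := p_onto \bot (in_setT _); exists x.
apply/setP => y; rewrite !inE; apply: andb_id2l => yJ.
apply/idP/existsP => [|[m /andP[/andP[+ _] ym]]]; last first.
  by rewrite inE => /andP[_ /p_homo]; apply: le_trans.
rewrite -{1}(joins_birkhoff a) join_preserving_joins //.
case/(join_irr_le_joins yJ) => s sB ys.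
have [m mmax sm] := exists_maximal_above sB.
by exists m; rewrite mmax (le_trans ys (p_homo _ _ sm)).
Qed.
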